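(* In a PL+C model, suppose $\sum_{h\in\mathcal U}p_h\ge\alpha k$ for some $\alpha>1$. Let $i,j\in\mathcal U$ with $i\ne j$, and let $\Pr'_{PLC}$ denote PL+C probabilities when $p_j$ is replaced by some $p_j'\in(p_j,1]$ (all other parameters unchanged). Then $$\Pr'_{PLC}(\mathcal R_{i=1})\le\Pr_{PLC}(\mathcal R_{i=1})+\frac{(\alpha e^{1-\alpha})^k}{1-(\alpha e^{1-\alpha})^k}.$$ Moreover, if at least $k+1$ of the consideration probabilities equal $1$ after the replacement, then $\Pr'_{PLC}(\mathcal R_{i=1})\le\Pr_{PLC}(\mathcal R_{i=1})$.
   Context: PL+C model: universe $\mathcal U=\{1,\dots,n\}$, fixed ranking length $k\le n$. Each item $h$ has a utility $u_h\in\mathbb R$ and a consideration probability $p_h\in(0,1]$. A consideration set $C$ is drawn by including each item independently with probability $p_h$, conditioned on $|C|\ge k$: $\Pr_C(C)=\frac{1}{z_{k,p}}\prod_{h\in C}p_h\prod_{h\notin C}(1-p_h)$ for $|C|\ge k$ (with $z_{k,p}$ the normalizing constant), and $0$ otherwise. Given $C$, a length-$k$ ranking $r$ has probability $\Pr_{PL}(r\mid C)=\prod_{t=1}^k \frac{\exp(u_{r_t})}{\sum_{h\in C\setminus\{r_1,\dots,r_{t-1}\}}\exp(u_h)}$ if all $r_t\in C$, else $0$. $\Pr_{PLC}(r)=\sum_C\Pr_C(C)\Pr_{PL}(r\mid C)$, and for a set $R$ of rankings $\Pr_{PLC}(R)=\sum_{r\in R}\Pr_{PLC}(r)$. $\mathcal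 R_{i=1}$ is the set of length-$k$ rankings with $i$ in the first position. *)

From HB Require Import structures.
From mathcomp Require Import all_boot all_order all_algebra.
From mathcomp Require Import reals.
From mathcomp Require Import sequences exp.
Set Implicit Arguments. Unset Strict Implicit. Unset Printing Implicit Defensive.
Import Order.TTheory GRing.Theory Num.Theory.
Local Open Scope ring_scope.

(* PL+C model. Universe = 'I_n, consideration sets = {set 'I_n},
   length-k rankings = duplicate-free k.-tuples of items. *)
Section PLC.
Variables (R : realType) (n k : nat) (u p : 'I_n -> R).

Definition cweight (C : {set 'I_n}) : R :=
  (\prod_(h in C) p h) * (\prod_(h in ~: C) (1 - p h)).

Definition zkp : R := \sum_(C : {set 'I_n} | (k <= #|C|)%N) cweight C.

Definition PrC (C : {set 'I_n}) : R :=
  if (k <= #|C|)%N then cweight C / zkp else 0.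

Definition before (r : k.-tuple 'I_n) (t : 'I_k) : {set 'I_n} :=
  [set tnth r s | s : 'I_k & (s < t)%N].

Definition PrPL (r : k.-tuple 'I_n) (C : {set 'I_n}) : R :=
  if [forall t : 'I_k, tnth r t \in C] then
    \prod_(t < k) (expR (u (tnth r t)) /
                   \sum_(h in C :\: before r t) expR (u h))
  else 0.

Definition PrPLC (r : k.-tuple 'I_n) : R :=
  \sum_(C : {set 'I_n}) PrC C * PrPL r C.

Definition PrFirst (i : 'I_n) : R :=
  \sum_(r : k.-tuple 'I_n | uniq r && (ohead r == Some i)) PrPLC r.

End PLC.

From HB Require Import structures.
From mathcomp Require Import all_boot all_order all_algebra.
From mathcomp Require Import reals.
From mathcomp Require Import sequences exp.
From mathcomp Require Import ring lra.
Import Order.TTheory GRing.Theory Num.Theory.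
Local Open Scope ring_scope.
Set Implicit Arguments. Unset Strict Implicit. Unset Printing Implicit Defensive.

(* Summing the Plackett-Luce probabilities of all rankings starting with i
   gives the probability f(C) = [i \in C] e^{u_i} / \sum_{h \in C} e^{u_h} that
   i is chosen first from C, so Pr(R_{i=1}) = E_p[1{|C| >= k} f(C)] / z_{k,p},
   the expectation being over independent Bernoulli(p_h) inclusions.  Adding
   j to C can only decrease f, while 0 <= f <= 1; hence the function
   1{|C| >= k} f(C) + 1{|C| < k} decreases when j is added, and raising p_j
   lowers its expectation, whereas z_{k,p} grows.  With q = Pr_p(|C| < k) =
   1 - z_{k,p} this gives Pr'(R_{i=1}) <= Pr(R_{i=1}) + q / (1 - q).  A
   Chernoff bound gives q <= (alpha e^{1-alpha})^k, and q = 0 as soon as k of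
   the p_h equal 1. *)

Lemma sum_tuple_cons (V : nmodType) (T : finType) m (F : seq T -> V) :
  \sum_(r : m.+1.-tuple T) F r = \sum_(x : T) \sum_(r : m.-tuple T) F (x :: r).
Proof.
rewrite pair_big /=.
rewrite (reindex (fun xr : T * m.-tuple T => [tuple of xr.1 :: xr.2])) /=.
  by apply: eq_bigr => -[x r].
exists (fun r : m.+1.-tuple T => (thead r, [tuple of behead r])).
  by move=> [x r] _ /=; rewrite theadE; congr pair; apply: val_inj.
by move=> r _; apply: val_inj => /=; rewrite [in RHS](tuple_eta r).
Qed.

Section PlackettLuce.
Variables (R : realType) (n : nat) (u : 'I_n -> R).
Implicit Types (C D : {set 'I_n}) (s : seq 'I_n).

Definition expsum D : R := \sum_(h in D) expR (u h).

Fixpoint pl_seq D s : R :=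
  if s is x :: s' then expR (u x) / expsum D * pl_seq (D :\ x) s' else 1.

Definition pl_prob D s : R :=
  if uniq s && all (fun y => y \in D) s then pl_seq D s else 0.

Lemma expsum_ge0 D : 0 <= expsum D.
Proof. by apply: sumr_ge0 => h _; apply/ltW/expR_gt0. Qed.

Lemma expsum_gt0 D x : x \in D -> 0 < expsum D.
Proof.
move=> xD; rewrite /expsum (bigD1 x) //= ltr_pwDl ?expR_gt0 //.
by apply: sumr_ge0 => h _; apply/ltW/expR_gt0.
Qed.

Lemma expsum_setU1 D j : expsum D <= expsum (j |: D).
Proof.
case jD: (j \in D); first by rewrite (setUidPr _) ?sub1set.
by rewrite /expsum big_setU1 ?jD //= lerDr; apply/ltW/expR_gt0.
Qed.

Lemma all_in_setD1 D x s :
  (x \notin s) && all (fun y => y \in D) s = all (fun y => y \in D :\ x) s.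
Proof.
elim: s => [|y s IH] //=; rewrite in_cons negb_or -IH !inE eq_sym.
by case: (y == x); case: (x \in s); case: (y \in D); case: (all _ _).
Qed.

Lemma pl_prob_cons D x s :
  pl_prob D (x :: s) = (x \in D)%:R * (expR (u x) / expsum D) * pl_prob (D :\ x) s.
Proof.
rewrite /pl_prob /= -all_in_setD1.
by case: (x \in D); case: (x \notin s); case: (uniq s); case: (all _ _);
  rewrite /= ?andbF ?mul0r ?mul1r ?mulr0.
Qed.

Lemma sum_pl_prob m D : (m <= #|D|)%N -> \sum_(r : m.-tuple 'I_n) pl_prob D r = 1.
Proof.
elim: m D => [|m IH] D leD.
  rewrite (eq_bigr (fun _ => 1)) => [|r _]; last by rewrite (tuple0 r).
  by rewrite sumr_const card_tuple expn0.
have [x xD] : exists x, x \in D.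
  by apply/set0Pn; rewrite -card_gt0; apply: leq_trans leD.
rewrite sum_tuple_cons.
rewrite (eq_bigr (fun y => (y \in D)%:R * (expR (u y) / expsum D))) => [|y _].
  under eq_bigr do rewrite mulr_natl mulrb.
  by rewrite -big_mkcond -mulr_suml divff // gt_eqF // (expsum_gt0 xD).
under eq_bigr do rewrite pl_prob_cons.
rewrite -mulr_sumr; have [yD|] := boolP (y \in D); last by rewrite !mul0r.
by rewrite (cardsD1 y D) yD add1n ltnS in leD; rewrite IH ?mulr1.
Qed.

Lemma sum_pl_prob_head m C i : (m.+1 <= #|C|)%N ->
  \sum_(r : m.+1.-tuple 'I_n) (ohead r == Some i)%:R * pl_prob C r =
  (i \in C)%:R * (expR (u i) / expsum C).
Proof.
move=> leC; rewrite (@sum_tuple_cons _ _ m (fun s => (ohead s == Some i)%:R * pl_prob C s)).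
rewrite (bigD1 i) //= [X in _ + X]big1 ?addr0 => [|x xi]; last first.
  by apply: big1 => r _; rewrite /= (inj_eq Some_inj) (negbTE xi) mul0r.
under eq_bigr do rewrite eqxx mul1r pl_prob_cons.
rewrite -mulr_sumr; case iC: (i \in C); last by rewrite !mul0r.
by rewrite (cardsD1 i C) iC add1n ltnS in leC; rewrite sum_pl_prob ?mulr1.
Qed.

Lemma pl_seq_prod D s x0 :
  \prod_(0 <= t < size s)
     (expR (u (nth x0 s t)) / \sum_(h in D :\: [set y in take t s]) expR (u h))
  = pl_seq D s.
Proof.
elim: s D => [|x s IH] D /=; first by rewrite big_nil.
rewrite big_nat_recl //= -IH; congr (_ * _).
  by congr (_ / _); apply: eq_bigl => h; rewrite !inE.
apply: eq_bigr => t _; congr (_ / _); apply: eq_bigl => h.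
by rewrite !inE negb_or; case: (h == x); case: (h \in take t s).
Qed.

Lemma before_take k (r : k.-tuple 'I_n) (t : 'I_k) :
  before r t = [set y in take t r].
Proof.
pose x0 := tnth r t.
apply/setP => y; rewrite !inE; apply/imsetP/idP.
  move=> [s]; rewrite inE => st ->.
  rewrite (tnth_nth x0) -(nth_take x0 st); apply: mem_nth.
  by rewrite size_take size_tuple ltn_min st ltn_ord.
move=> yin; have := yin; rewrite -index_mem size_take size_tuple => hi.
have hik : (index y (take t r) < k)%N by apply: leq_trans hi (geq_minr _ _).
exists (Ordinal hik); first by rewrite inE /= (leq_trans hi (geq_minl _ _)).
rewrite (tnth_nth x0) /= -(nth_take x0 (leq_trans hi (geq_minl _ _))).
by rewrite nth_index.
Qed.

Lemma PrPL_pl_seq k (r : k.-tuple 'I_n) C :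
  PrPL u r C = if all (fun y => y \in C) r then pl_seq C r else 0.
Proof.
rewrite /PrPL; case: (@all_tnthP _ _ (fun y => y \in C) r) => [inC|notinC].
  rewrite (introT forallP inC).
  case: k r inC => [|k] r _; first by rewrite (tuple0 r) big_ord0.
  rewrite -(pl_seq_prod C r (thead r)) size_tuple big_mkord.
  by apply: eq_bigr => t _; rewrite (tnth_nth (thead r)) before_take.
by case: forallP => // inC; case: notinC => t; apply: inC.
Qed.

End PlackettLuce.

Section ConsiderationSets.
Variables (R : realType) (n : nat).
Implicit Types (p : 'I_n -> R) (C : {set 'I_n}) (F G : {set 'I_n} -> R).

Definition is_prob_vec p := forall h, 0 <= p h <= 1.

Definition expect p F : R := \sum_C cweight p C * F C.

Lemma cweight_prod p C :
  cweight p C = \prod_h (if h \in C then p h else 1 - p h).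
Proof.
rewrite /cweight (big_mkcond (fun h => h \in C)) (big_mkcond (fun h => h \in ~: C)).
rewrite -big_split /=; apply: eq_bigr => h _; rewrite inE.
by case: (h \in C); rewrite /= ?mulr1 ?mul1r.
Qed.

Lemma cweight_ge0 p C : is_prob_vec p -> 0 <= cweight p C.
Proof.
move=> p_prob; rewrite cweight_prod; apply: prodr_ge0 => h _.
by have /andP[ph_ge0 ph_le1] := p_prob h; case: (h \in C); rewrite ?subr_ge0.
Qed.

Lemma sum_cweight p : \sum_C cweight p C = 1.
Proof.
under eq_bigr do rewrite cweight_prod.
rewrite -(@bigA_distr R 0 1 *%R +%R _ (fun h => p h) (fun h => 1 - p h)) /=.
by apply: big1 => h _; rewrite addrC subrK.
Qed.

Lemma expect_ge0 p F : is_prob_vec p -> (forall C, 0 <= F C) -> 0 <= expect p F.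
Proof. by move=> p_prob F_ge0; apply: sumr_ge0 => C _; rewrite mulr_ge0 ?cweight_ge0. Qed.

Lemma expectD p F G : expect p (fun C => F C + G C) = expect p F + expect p G.
Proof. by rewrite /expect -big_split; apply: eq_bigr => C _; rewrite mulrDr. Qed.

Lemma ler_expect p F G : is_prob_vec p -> (forall C, F C <= G C) ->
  expect p F <= expect p G.
Proof. by move=> p_prob leFG; apply: ler_sum => C _; rewrite ler_wpM2l ?cweight_ge0. Qed.

Section RaiseOne.
Variable j : 'I_n.

Definition cweight_off p C := \prod_(h | h != j) (if h \in C then p h else 1 - p h).

Lemma cweight_split p C :
  cweight p C = (if j \in C then p j else 1 - p j) * cweight_off p C.
Proof. by rewrite cweight_prod (bigD1 j). Qed.

Lemma cweight_off_setU1 p C : cweight_off p (j |: C) = cweight_off p C.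
Proof. by apply: eq_bigr => h hj; rewrite !inE (negbTE hj). Qed.

Lemma expect_pair p F : expect p F =
  \sum_(C : {set 'I_n} | j \notin C) cweight_off p C * ((1 - p j) * F C + p j * F (j |: C)).
Proof.
rewrite /expect (bigID (fun C => j \in C)) /= addrC.
rewrite [X in _ + X](reindex_onto (fun C : {set 'I_n} => j |: C) (fun C => C :\ j)) /=;
  last exact: setD1K.
rewrite [X in _ + X](eq_bigl (fun C => j \notin C)) => [|C]; last first.
  rewrite setU11 /=; have [jC|jC] := boolP (j \in C); last by rewrite setU1K ?eqxx.
  by apply/eqP => e; move: jC; rewrite -e !inE eqxx.
rewrite -big_split /=; apply: eq_bigr => C jC.
rewrite !cweight_split cweight_off_setU1 setU11 (negbTE jC); ring.
Qed.

(* Conditionally on the other coordinates, raising p_j moves mass from C to j |: C. *)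
Lemma ler_expect_raise p p' F : is_prob_vec p ->
  (forall h, h != j -> p' h = p h) -> p j <= p' j ->
  (forall C, F (j |: C) <= F C) -> expect p' F <= expect p F.
Proof.
move=> p_prob p'E le_pj F_anti; rewrite !expect_pair; apply: ler_sum => C _.
have -> : cweight_off p' C = cweight_off p C by apply: eq_bigr => h hj; rewrite p'E.
apply: ler_wpM2l.
  apply: prodr_ge0 => h _; have /andP[ph_ge0 ph_le1] := p_prob h.
  by case: (h \in C); rewrite ?subr_ge0.
rewrite -subr_ge0.
have -> : (1 - p j) * F C + p j * F (j |: C) - ((1 - p' j) * F C + p' j * F (j |: C))
  = (p' j - p j) * (F C - F (j |: C)) by ring.
by rewrite mulr_ge0 // subr_ge0.
Qed.

End RaiseOne.

Lemma expect_pow_card p t :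
  expect p (fun C => t ^+ #|C|) = \prod_h (t * p h + (1 - p h)).
Proof.
rewrite (@bigA_distr R 0 1 *%R +%R _ (fun h => t * p h) (fun h => 1 - p h)) /=.
apply: eq_bigr => C _.
rewrite cweight_prod -prodr_const [X in _ * X]big_mkcond /= -big_split /=.
by apply: eq_bigr => h _; case: (h \in C); rewrite ?mulr1 // mulrC.
Qed.

(* Chernoff bound, obtained from Markov's inequality for alpha^-|C|. *)
Lemma expect_card_lt_le p (alpha : R) k : is_prob_vec p -> 1 < alpha ->
  alpha * k%:R <= \sum_h p h ->
  expect p (fun C => (#|C| < k)%N%:R) <= (alpha * expR (1 - alpha)) ^+ k.
Proof.
move=> p_prob alpha_gt1 sum_p_ge.
have alpha_gt0 : 0 < alpha by apply: lt_trans alpha_gt1.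
pose t := alpha^-1.
have t_gt0 : 0 < t by rewrite invr_gt0.
have t_lt1 : t < 1 by rewrite invf_lt1.
have markov : expect p (fun C => (#|C| < k)%N%:R) <=
    alpha ^+ k * expect p (fun C => t ^+ #|C|).
  rewrite /expect mulr_sumr; apply: ler_sum => C _.
  rewrite mulrCA; apply: ler_wpM2l; first exact: cweight_ge0.
  case: ltnP => [small|_] /=; last by rewrite mulr_ge0 // exprn_ge0 // ltW.
  by rewrite /t exprVn ler_pdivlMr ?exprn_gt0 // mul1r ler_eXn2l // ltnW.
have factor_le h : t * p h + (1 - p h) <= expR ((t - 1) * p h).
  have -> : t * p h + (1 - p h) = 1 + (t - 1) * p h by ring.
  exact: expR_ge1Dx.
have sum_le : expR ((t - 1) * \sum_h p h) <= expR (1 - alpha) ^+ k.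
  rewrite -expRM_natr ler_expR.
  have -> : (1 - alpha) * k%:R = (t - 1) * (alpha * k%:R).
    by rewrite /t mulrA [(_ - 1) * alpha]mulrBl mulVf ?gt_eqF // mul1r.
  by rewrite ler_nM2l ?subr_lt0.
apply: (le_trans markov); rewrite expect_pow_card exprMn.
apply: ler_wpM2l; first by rewrite exprn_ge0 // ltW.
apply: le_trans sum_le; rewrite mulr_sumr expR_sum; apply: ler_prod => h _.
have /andP[ph_ge0 ph_le1] := p_prob h.
by rewrite factor_le andbT; nra.
Qed.

Lemma expect_card_lt_eq0 p k : (k <= #|[set h | p h == 1%R]|)%N ->
  expect p (fun C => (#|C| < k)%N%:R) = 0.
Proof.
move=> many_certain; apply: big1 => C _; case: ltnP => [small|_]; last by rewrite mulr0.
have : ~~ ([set h | p h == 1] \subset C).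
  apply: contraTN small => sub; rewrite -leqNgt.
  exact: leq_trans many_certain (subset_leq_card sub).
case/subsetPn => h; rewrite inE => /eqP ph1 hC.
by rewrite cweight_prod (bigD1 h) //= (negbTE hC) ph1 subrr !mul0r.
Qed.

Lemma card_eq1_update p p' j : (forall h, h != j -> p' h = p h) ->
  (#|[set h | p' h == 1%R]| <= #|[set h | p h == 1%R]|.+1)%N.
Proof.
move=> p'E; rewrite (cardsD1 j [set h | p' h == 1]) -add1n leq_add ?leq_b1 //.
by apply/subset_leq_card/subsetP => h; rewrite !inE => /andP[/p'E->].
Qed.

End ConsiderationSets.

Section FirstPlace.
Variables (R : realType) (n k : nat) (u : 'I_n -> R) (i : 'I_n).
Hypothesis k_gt0 : (0 < k)%N.
Implicit Types (p : 'I_n -> R) (C : {set 'I_n}).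

Definition first_prob C : R := (i \in C)%:R * (expR (u i) / expsum u C).
Definition card_ge_k C : R := (k <= #|C|)%N%:R.
Definition card_lt_k C : R := (#|C| < k)%N%:R.

Lemma zkp_add_card_lt p : zkp k p + expect p card_lt_k = 1.
Proof.
rewrite /zkp big_mkcond -(sum_cweight p) -big_split /=; apply: eq_bigr => C _.
by rewrite /card_lt_k; case: leqP; rewrite /= ?mulr1 ?mulr0 ?add0r ?addr0.
Qed.

Lemma sum_PrPL_first C : (k <= #|C|)%N ->
  \sum_(r : k.-tuple 'I_n | uniq r && (ohead r == Some i)) PrPL u r C = first_prob C.
Proof.
case: k k_gt0 => // k' _ leC.
rewrite big_mkcond /= /first_prob -(sum_pl_prob_head u i leC); apply: eq_bigr => r _.
rewrite PrPL_pl_seq /pl_prob.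
by case: (uniq r); case: (ohead r == Some i); case: (all _ _); rewrite /= ?mul1r ?mul0r.
Qed.

Lemma PrFirst_expect p :
  PrFirst k u p i = expect p (fun C => card_ge_k C * first_prob C) / zkp k p.
Proof.
rewrite /PrFirst /PrPLC exchange_big /= /expect mulr_suml; apply: eq_bigr => C _.
rewrite -mulr_sumr /PrC /card_ge_k; case: leqP => [leC|_].
  by rewrite sum_PrPL_first // mul1r mulrAC.
by rewrite !mul0r mulr0 mul0r.
Qed.

Lemma first_prob_ge0 C : 0 <= first_prob C.
Proof.
rewrite /first_prob; case: (i \in C); rewrite ?mul0r // mul1r.
by rewrite divr_ge0 ?expsum_ge0 // ltW ?expR_gt0.
Qed.

Lemma first_prob_le1 C : first_prob C <= 1.
Proof.
rewrite /first_prob; case iC: (i \in C); rewrite ?mul0r // mul1r.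
rewrite ler_pdivrMr ?(expsum_gt0 u iC) // mul1r /expsum (bigD1 i) //= lerDl.
by apply: sumr_ge0 => h _; apply/ltW/expR_gt0.
Qed.

Lemma first_prob_setU1 j C : i != j -> first_prob (j |: C) <= first_prob C.
Proof.
move=> ij; rewrite /first_prob !inE (negbTE ij) /=.
case iC: (i \in C); rewrite ?mul0r // !mul1r.
have S_gt0 := expsum_gt0 u iC.
have S'_gt0 : 0 < expsum u (j |: C) by apply: lt_le_trans S_gt0 (expsum_setU1 u C j).
by rewrite ler_pM2l ?expR_gt0 // lef_pV2 ?posrE ?expsum_setU1.
Qed.

Lemma PrFirst_raise_le p p' j : is_prob_vec p -> is_prob_vec p' -> i != j ->
  (forall h, h != j -> p' h = p h) -> p j <= p' j ->
  expect p card_lt_k < 1 ->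
  PrFirst k u p' i <=
    PrFirst k u p i + expect p card_lt_k / (1 - expect p card_lt_k).
Proof.
move=> p_prob p'_prob ij p'E le_pj q_lt1.
set q := expect p card_lt_k.
set N := expect p (fun C => card_ge_k C * first_prob C).
set N' := expect p' (fun C => card_ge_k C * first_prob C).
have card_setU1 C : (#|C| <= #|j |: C|)%N by apply/subset_leq_card/subsetUr.
have q'_le : expect p' card_lt_k <= q.
  apply: (ler_expect_raise p_prob p'E le_pj) => C; rewrite /card_lt_k.
  case: (ltnP #|C| k) => [_|leC]; first by rewrite ler_nat leq_b1.
  by rewrite ltnNge (leq_trans leC (card_setU1 C)).
have N'_le : N' <= N + q.
  rewrite -expectD; apply: le_trans (ler_expect_raise p_prob p'E le_pj _).
    by apply: ler_expect => // C; rewrite lerDl.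
  move=> C; rewrite /card_ge_k /card_lt_k; case: (leqP k #|C|) => [leC|_].
    rewrite ltnNge (leq_trans leC (card_setU1 C)) /= !mul1r !addr0.
    exact: first_prob_setU1.
  by case: leqP; rewrite /= ?mul0r ?mul1r ?add0r ?addr0 ?first_prob_le1.
have z_gt0 : 0 < 1 - q by rewrite subr_gt0.
have N'_ge0 : 0 <= N' by apply: expect_ge0 => // C; rewrite mulr_ge0 ?first_prob_ge0.
have zE p0 : zkp k p0 = 1 - expect p0 card_lt_k by rewrite -(zkp_add_card_lt p0) addrK.
have z'_ge : 1 - q <= 1 - expect p' card_lt_k by rewrite lerD2l lerN2.
rewrite !PrFirst_expect -/N -/N' !zE -/q.
apply: (@le_trans _ _ (N' / (1 - q))).
  by rewrite ler_wpM2l // lef_pV2 ?posrE // (lt_le_trans z_gt0).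
by rewrite -mulrDl ler_wpM2r // invr_ge0 ltW.
Qed.

End FirstPlace.

Lemma ler_odds (R : realFieldType) (q x : R) :
  0 <= q -> q <= x -> x < 1 -> q / (1 - q) <= x / (1 - x).
Proof.
move=> q_ge0 le_qx x_lt1.
have x'_gt0 : 0 < 1 - x by rewrite subr_gt0.
have q'_gt0 : 0 < 1 - q by rewrite subr_gt0; apply: le_lt_trans x_lt1.
rewrite ler_pdivrMr // mulrAC ler_pdivlMr //; nra.
Qed.

Lemma mul_expR1B_lt1 (R : realType) (alpha : R) :
  1 < alpha -> alpha * expR (1 - alpha) < 1.
Proof.
move=> alpha_gt1; rewrite -opprB expRN ltr_pdivrMr ?expR_gt0 // mul1r.
by rewrite -[X in X < _](subrK 1) addrC expR_gt1Dx // subr_eq0 gt_eqF.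
Qed.

Theorem lemma5 (R : realType) (n k : nat) (u p p' : 'I_n -> R)
  (alpha : R) (i j : 'I_n) :
  (0 < k)%N -> (k <= n)%N ->
  (forall h, 0 < p h <= 1) ->
  1 < alpha ->
  alpha * k%:R <= \sum_(h < n) p h ->
  i != j ->
  (forall h, h != j -> p' h = p h) ->
  p j < p' j <= 1 ->
  PrFirst k u p' i <=
    PrFirst k u p i
    + (alpha * expR (1 - alpha)) ^+ k / (1 - (alpha * expR (1 - alpha)) ^+ k)
  /\
  ((k < #|[set h | p' h == 1%R]|)%N -> PrFirst k u p' i <= PrFirst k u p i).
Proof.
move=> k_gt0 _ p_range alpha_gt1 sum_p_ge ij p'E /andP[lt_pj p'j_le1].
have p_prob : is_prob_vec p by move=> h; have /andP[/ltW-> ->] := p_range h.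
have p'_prob : is_prob_vec p'.
  move=> h; have [->|hj] := eqVneq h j; last by rewrite p'E.
  have /andP[pj_gt0 _] := p_range j.
  by rewrite p'j_le1 andbT ltW // (lt_trans pj_gt0).
have raise := PrFirst_raise_le u k_gt0 p_prob p'_prob ij p'E (ltW lt_pj).
have q_ge0 : 0 <= expect p (card_lt_k R k) by apply: expect_ge0.
split.
  set x := alpha * expR (1 - alpha).
  have xk_lt1 : x ^+ k < 1.
    by rewrite exprn_ilt1 ?mul_expR1B_lt1 -?lt0n // mulr_ge0 ?expR_ge0 ?ltW ?(lt_trans ltr01).
  have q_le : expect p (card_lt_k R k) <= x ^+ k by apply: expect_card_lt_le.
  apply: le_trans (raise (le_lt_trans q_le xk_lt1)) _.
  by rewrite lerD2l ler_odds.
move=> many_certain.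
have q_eq0 : expect p (card_lt_k R k) = 0.
  apply: expect_card_lt_eq0; rewrite -ltnS.
  exact: leq_trans many_certain (card_eq1_update p'E).
have q_lt1 : expect p (card_lt_k R k) < 1 by rewrite q_eq0 ltr01.
by have := raise q_lt1; rewrite q_eq0 mul0r addr0.
Qed.
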